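(* Let $m\ge4$ be even and let $f:\mathrm{GF}(2^m)\to\mathrm{GF}(2)$ be a bent function with $f(0)=0$; put $n_f=|D_f|$ (so $n_f=2^{m-1}\pm2^{(m-2)/2}$). Then $\mathcal{C}_{D_f}$ is a two-weight binary code with parameters $[n_f,\ m,\ (n_f-2^{(m-2)/2})/2]$, whose nonzero weights are $\frac{n_f}{2}-2^{(m-4)/2}$ with multiplicity $\frac{2^m-1-n_f2^{-(m-2)/2}}{2}$ and $\frac{n_f}{2}+2^{(m-4)/2}$ with multiplicity $\frac{2^m-1+n_f2^{-(m-2)/2}}{2}$.
   Context: $\mathrm{Tr}$ denotes the absolute trace from $\mathrm{GF}(2^m)$ onto $\mathrm{GF}(2)$. For a subset $D=\{d_1,\dots,d_n\}\subseteq\mathrm{GF}(2^m)$ (listed in a fixed order), $\mathcal{C}_D=\{(\mathrm{Tr}(xd_1),\dots,\mathrm{Tr}(xd_n)) : x\in\mathrm{GF}(2^m)\}$, a binary linear code of length $n$. The support of $f$ is $D_f=\{x:f(x)=1\}$. The Walsh transform of $f$ is $\hat f(w)=\sum_{x\in\mathrm{GF}(2^m)}(-1)^{f(x)+\mathrm{Tr}(wx)}$; $f$ is bent if $|\hat f(w)|=2^{m/2}$ for all $w\in\mathrm{GF}(2^m)$. *)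

From HB Require Import structures.
From mathcomp Require Import all_boot all_order all_algebra all_field.
Set Implicit Arguments. Unset Strict Implicit. Unset Printing Implicit Defensive.
Import Order.TTheory GRing.Theory Num.Theory.
Local Open Scope ring_scope.

(* F plays the role of GF(2^m) (a finite field with #|F| = 2^m). *)

(* Absolute trace GF(2^m) -> GF(2): Tr(x) = x + x^2 + x^4 + ... + x^(2^(m-1)).
   Its values are 0 or 1 in F (the prime subfield GF(2)). *)
Definition Tr (F : finFieldType) (m : nat) (x : F) : F :=
  \sum_(i < m) x ^+ (2 ^ i).

Definition walsh (F : finFieldType) (m : nat) (f : F -> bool) (w : F) : int :=
  \sum_(x : F) ((-1) : int) ^+ (addn (nat_of_bool (f x)) (nat_of_bool (Tr m (w * x) == 1))).

Definition is_bent (F : finFieldType) (m : nat) (f : F -> bool) : Prop :=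
  forall w : F, `|walsh m f w| = (2 ^ m./2)%:Z.

Definition supp (F : finFieldType) (f : F -> bool) : {set F} := [set x | f x].

Definition word (n : nat) := {ffun 'I_n -> bool}.
Definition zero_word (n : nat) : word n := [ffun => false].
Definition wt (n : nat) (c : word n) : nat := #|[set i | c i]|.

(* Codeword of x for D = {d_1,...,d_n}, listed in the fixed order enum D:
   (Tr(x d_1), ..., Tr(x d_n)). *)
Definition codeword (F : finFieldType) (m : nat) (D : {set F}) (x : F)
  : word #|D| := [ffun i => Tr m (x * @enum_val F (mem D) i) == 1].

Definition code (F : finFieldType) (m : nat) (D : {set F}) : {set word #|D|} :=
  [set codeword m D x | x : F].

Definition nz_weights (n : nat) (C : {set word n}) : {set 'I_n.+1} :=
  [set inord (wt c) | c in C & c != zero_word n].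

Definition wmult (n : nat) (C : {set word n}) (w : nat) : nat :=
  #|[set c in C | wt c == w]|.

Definition is_min_dist (n : nat) (C : {set word n}) (d : nat) : Prop :=
  (exists2 c, c \in C & (c != zero_word n) && (wt c == d)) /\
  (forall c, c \in C -> c != zero_word n -> (d <= wt c)%N).

From HB Require Import structures.
From mathcomp Require Import all_boot all_order all_algebra all_field.
From mathcomp Require Import zify ring.
Import Order.TTheory GRing.Theory Num.Theory.
Local Open Scope ring_scope.
Set Implicit Arguments. Unset Strict Implicit.

(* The codeword of x has weight wt(x) = #{d in D_f | Tr(x d) = 1}.  Since Tr(w .) takes the
   value 1 exactly 2^(m-1) times for w <> 0, the Walsh transform expands as
   hat f(0) = 2^m - 2 n_f and hat f(w) = 4 wt(w) - 2 n_f for w <> 0.  Bentness thus forces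
   n_f = 2k with k = 2^(m-2) +- 2^((m-4)/2), and wt(w) = k +- 2^((m-4)/2) for all w <> 0;
   in particular x |-> codeword x is injective.  The two multiplicities are determined by
   their sum 2^m - 1 and the first moment sum_w wt(w) = n_f 2^(m-1). *)

Section Trace.
Variables (F : finFieldType) (m : nat).
Hypotheses (cardF : #|F| = (2 ^ m)%N) (m_gt0 : (0 < m)%N).

Let pchar2 : 2%N \in [pchar F]. Proof. exact: (card_finPcharP cardF). Qed.

Lemma TrD (x y : F) : Tr m (x + y) = Tr m x + Tr m y.
Proof.
rewrite /Tr -big_split; apply: eq_bigr => i _; apply: exprDn_pchar.
by rewrite pnatX (pnatE _ (isT : prime 2)) pchar2.
Qed.

Lemma Tr0 : Tr m (0 : F) = 0.
Proof. by rewrite /Tr big1 // => i _; rewrite expr0n expn_eq0. Qed.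

Lemma Tr_sqr (x : F) : Tr m x ^+ 2 = Tr m x.
Proof.
have -> : Tr m x ^+ 2 = \sum_(i < m) x ^+ (2 ^ i.+1).
  rewrite -[_ ^+ 2]/(pFrobenius_aut pchar2 _) rmorph_sum.
  by apply: eq_bigr => i _; rewrite /= pFrobenius_autE -exprM expnSr.
rewrite /Tr -(prednK m_gt0) big_ord_recr big_ord_recl /= addrC prednK //.
by rewrite -cardF expf_card expn0 expr1.
Qed.

Lemma Tr_bit (x : F) : Tr m x = 0 \/ Tr m x = 1.
Proof.
have /eqP : Tr m x * (Tr m x - 1) = 0 by rewrite mulrBr mulr1 -expr2 Tr_sqr subrr.
by rewrite mulf_eq0 subr_eq0 => /orP[] /eqP; [left | right].
Qed.

Definition trb (x : F) : bool := Tr m x == 1.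

Lemma trbD (x y : F) : trb (x + y) = trb x (+) trb y.
Proof.
have one_add_one : (1 + 1 : F) = 0 by have /andP[_ /eqP] := pchar2.
rewrite /trb TrD; case: (Tr_bit x) => ->; case: (Tr_bit y) => ->;
  by rewrite ?addr0 ?add0r ?one_add_one ?eqxx // eq_sym oner_eq0.
Qed.

Lemma trbB (x y : F) : trb (x - y) = trb x (+) trb y.
Proof. by rewrite -[in RHS](subrK y x) [in RHS]trbD -addbA addbb addbF. Qed.

Lemma trb0 : trb 0 = false.
Proof. by rewrite /trb Tr0 eq_sym oner_eq0. Qed.

(* The trace is a nonzero polynomial of degree 2^(m-1) < #|F|, so it cannot vanish on all of F. *)
Lemma exists_trb : exists z : F, trb z.
Proof.
have [z trb_z | trb_false] := pickP trb; first by exists z.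
pose q : {poly F} := \sum_(i < m) 'X^(2 ^ i).
have q_coef1 : q`_1 = 1.
  rewrite /q coef_sum -(prednK m_gt0) big_ord_recl big1 ?coefXn ?addr0 // => i _.
  by rewrite coefXn /bump /= expnS mul2n; case: eqP => // /(congr1 odd); rewrite odd_double.
have q_neq0 : q != 0.
  by apply: contra_eq_neq q_coef1 => ->; rewrite coef0 eq_sym oner_eq0.
have q_roots : all (root q) (enum F).
  apply/allP => z _; rewrite /root horner_sum.
  under eq_bigr do rewrite hornerXn.
  have [Trz0 | Trz1] := Tr_bit z; first by rewrite -/(Tr m z) Trz0.
  by have := trb_false z; rewrite /trb Trz1 eqxx.
have := max_poly_roots q_neq0 q_roots (enum_uniq F).
rewrite -cardE cardF ltnNge => /negP[].
apply: leq_trans (size_sum _ _ _) _; apply/bigmax_leqP => i _.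
by rewrite size_polyXn ltn_exp2l.
Qed.

Lemma sum_trb : (\sum_(x : F) trb x)%N = (2 ^ m.-1)%N.
Proof.
have [z trb_z] := exists_trb.
have trb_balanced : (\sum_(x : F) trb x)%N = (\sum_(x : F) ~~ trb x)%N.
  by rewrite (reindex_inj (addIr z)); apply: eq_bigr => x _; rewrite trbD trb_z addbT.
have : (\sum_(x : F) trb x + \sum_(x : F) ~~ trb x)%N = (2 ^ m)%N.
  by rewrite -big_split -cardF -sum1_card; apply: eq_bigr => x _; case: (trb x).
by rewrite -trb_balanced -(prednK m_gt0) expnS prednK //; lia.
Qed.

Lemma sum_trbMr (y : F) : y != 0 -> (\sum_(x : F) trb (x * y)%R)%N = (2 ^ m.-1)%N.
Proof. by move=> y_neq0; rewrite -sum_trb [RHS](reindex_inj (mulIf y_neq0)). Qed.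

End Trace.

Lemma sum_nat_bool (T : finType) (P : pred T) : (\sum_(x : T) P x)%N = #|[set x | P x]|.
Proof. by rewrite -sum1dep_card [RHS]big_mkcond; apply: eq_bigr => x _; case: (P x). Qed.

Section TraceCode.
Variables (F : finFieldType) (m : nat) (D : {set F}).

Definition trace_weight (x : F) : nat := (\sum_(y in D) trb m (x * y)%R)%N.

Lemma wt_codeword (x : F) : wt (codeword m D x) = trace_weight x.
Proof.
rewrite /wt -sum_nat_bool /trace_weight (big_enum_val (fun y => trb m (x * y)%R : nat)).
by apply: eq_bigr => i _; rewrite ffunE.
Qed.

Lemma trace_weight0 : trace_weight 0 = 0%N.
Proof. by rewrite /trace_weight big1 // => y _; rewrite mul0r trb0. Qed.

Hypotheses (cardF : #|F| = (2 ^ m)%N) (m_gt0 : (0 < m)%N).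

Lemma codeword0 : codeword m D 0 = zero_word #|D|.
Proof. by apply/ffunP => i; rewrite !ffunE mul0r -/(trb m 0) trb0. Qed.

Lemma codewordB (x y : F) :
  codeword m D (x - y) = [ffun i => codeword m D x i (+) codeword m D y i].
Proof. by apply/ffunP => i; rewrite !ffunE mulrBl -/(trb m _) trbB. Qed.

Hypothesis trace_weight_gt0 : forall x, x != 0 -> (0 < trace_weight x)%N.

Lemma codeword_inj : injective (codeword m D).
Proof.
move=> x y eq_xy; apply/eqP; rewrite -subr_eq0; apply: contraTT isT => xy_neq0.
have := trace_weight_gt0 xy_neq0; rewrite -wt_codeword codewordB eq_xy.
by rewrite /wt -sum_nat_bool big1 // => i _; rewrite ffunE addbb.
Qed.

Lemma codeword_eq0 (x : F) : (codeword m D x == zero_word #|D|) = (x == 0).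
Proof. by rewrite -codeword0 (inj_eq codeword_inj). Qed.

Lemma card_code : #|code m D| = #|F|.
Proof. exact: card_imset codeword_inj. Qed.

Lemma wmult_code (w : nat) : wmult (code m D) w = #|[set x | trace_weight x == w]|.
Proof.
rewrite /wmult -[RHS](card_imset _ codeword_inj); apply: eq_card => c.
rewrite !inE; apply/andP/imsetP => [[/imsetP[x _ ->]] | [x]].
  by rewrite wt_codeword => tw_x; exists x; rewrite ?inE.
by rewrite inE => tw_x ->; rewrite imset_f // wt_codeword.
Qed.

Lemma nz_weights_code :
  nz_weights (code m D) = [set inord (trace_weight x) | x in [set x : F | x != 0]].
Proof.
apply/setP => w; apply/imsetP/imsetP => [[c] | [x]].
  rewrite inE => /andP[/imsetP[x _ ->]]; rewrite codeword_eq0 wt_codeword => x_neq0 ->.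
  by exists x; rewrite ?inE.
rewrite inE => x_neq0 ->; exists (codeword m D x); last by rewrite wt_codeword.
by rewrite inE imset_f //= codeword_eq0.
Qed.

Lemma is_min_dist_code (d : nat) :
    (exists2 x, x != 0 & trace_weight x = d) ->
    (forall x, x != 0 -> (d <= trace_weight x)%N) ->
  is_min_dist (code m D) d.
Proof.
move=> [x x_neq0 tw_x] d_le; split.
  by exists (codeword m D x); rewrite ?imset_f // codeword_eq0 x_neq0 wt_codeword tw_x /=.
by move=> _ /imsetP[y _ ->]; rewrite codeword_eq0 wt_codeword; apply: d_le.
Qed.

End TraceCode.

Section Walsh.
Variables (F : finFieldType) (m : nat) (f : F -> bool).
Hypotheses (cardF : #|F| = (2 ^ m)%N) (m_gt0 : (0 < m)%N).

Local Notation D := (supp f).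

Lemma card_supp : #|D| = (\sum_(y : F) f y)%N.
Proof. by rewrite sum_nat_bool. Qed.

Lemma trace_weight_supp (x : F) :
  trace_weight m D x = (\sum_(y : F) (f y && trb m (x * y)%R))%N.
Proof. by rewrite /trace_weight big_mkcond; apply: eq_bigr => y _; rewrite inE; case: (f y). Qed.

Lemma sign_addn (a b : bool) :
  (-1 : int) ^+ (a + b)%N = 1 - 2 * (a : nat)%:R - 2 * (b : nat)%:R + 4 * (a && b : nat)%:R.
Proof. by case: a; case: b. Qed.

Lemma walshE (w : F) : walsh m f w =
  (2 ^ m)%N%:R - 2 * #|D|%:R - 2 * (\sum_(y : F) trb m (w * y)%R)%N%:R
    + 4 * (trace_weight m D w)%:R.
Proof.
rewrite /walsh card_supp trace_weight_supp -cardF !natr_sum !mulr_sumr -sumr_const.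
by rewrite -!sumrB -big_split; apply: eq_bigr => y _; rewrite sign_addn mulrC.
Qed.

Lemma walsh0 : walsh m f 0 = (2 ^ m)%N%:R - 2 * #|D|%:R.
Proof.
rewrite walshE trace_weight0 big1 => [|y _]; last by rewrite mul0r trb0.
by rewrite mulr0 addr0 subr0.
Qed.

Lemma walsh_neq0 (w : F) : w != 0 -> walsh m f w = 4 * (trace_weight m D w)%:R - 2 * #|D|%:R.
Proof.
move=> w_neq0; rewrite walshE; under eq_bigr do rewrite mulrC.
by rewrite sum_trbMr // -(prednK m_gt0) expnS prednK // natrM; ring.
Qed.

Lemma sum_trace_weight : f 0 = false ->
  (\sum_(x : F) trace_weight m D x)%N = (#|D| * 2 ^ m.-1)%N.
Proof.
move=> f0; rewrite /trace_weight exchange_big /= -sum_nat_const; apply: eq_bigr => y Dy.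
have y_neq0 : y != 0 by apply: contraTneq Dy => ->; rewrite inE f0.
exact: sum_trbMr.
Qed.

End Walsh.

Lemma solve_two_counts (R : numFieldType) (a b e k t : R) :
    e != 0 -> a + b + 1 = t -> e * a = e * b + k ->
  b = (t - 1 - k / e) / 2 /\ a = (t - 1 + k / e) / 2.
Proof.
move=> e_neq0 sum_ab diff_ab; have -> : k = e * a - e * b by rewrite diff_ab addrAC subrr add0r.
by rewrite -sum_ab; split; field.
Qed.

Section BentCode.
Variables (F : finFieldType) (m : nat) (f : F -> bool).
Hypotheses (cardF : #|F| = (2 ^ m)%N) (m_ge4 : (4 <= m)%N) (m_even : ~~ odd m).
Hypotheses (f_bent : is_bent m f) (f0 : f 0 = false).

Local Notation D := (supp f).
Local Notation n := #|D|.
Local Notation tw := (trace_weight m D).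

Let m_gt0 : (0 < m)%N. Proof. exact: leq_trans m_ge4. Qed.
Let e := (2 ^ (m - 4)./2)%N.
Let k := n./2.

Let e_gt0 : (0 < e)%N. Proof. by rewrite expn_gt0. Qed.

Lemma m_double : m = ((m - 4)./2 + 2).*2.
Proof. by have := odd_double_half m; rewrite (negbTE m_even); lia. Qed.

Lemma expn2_m : (2 ^ m = 16 * (e * e))%N.
Proof. by rewrite {1}m_double -addnn !expnD mulnACA mulnC. Qed.

Lemma expn2_pred_m : (2 ^ m.-1 = 8 * (e * e))%N.
Proof. by have := expn2_m; rewrite -(prednK m_gt0) expnS /=; lia. Qed.

Lemma expn2_half_m : (2 ^ m./2 = 4 * e)%N.
Proof. by rewrite {1}m_double doubleK expnD /e mulnC. Qed.

Lemma expn2_half_m2 : (2 ^ (m - 2)./2 = 2 * e)%N.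
Proof.
have -> : ((m - 2)./2 = (m - 4)./2 + 1)%N by rewrite {1}m_double; lia.
by rewrite expnD mulnC.
Qed.

Lemma half_supp_bent : n = (2 * k)%N /\ (k = 4 * (e * e) + e \/ k + e = 4 * (e * e))%N.
Proof. by have := f_bent 0; rewrite walsh0 // expn2_half_m expn2_m /k; lia. Qed.

Lemma trace_weight_bent (x : F) : x != 0 -> (tw x + e = k \/ tw x = k + e)%N.
Proof.
move=> x_neq0; have := f_bent x; rewrite walsh_neq0 // expn2_half_m.
by have := half_supp_bent; lia.
Qed.

Lemma trace_weight_bent_gt0 (x : F) : x != 0 -> (0 < tw x)%N.
Proof.
move=> /trace_weight_bent; have := half_supp_bent; have := e_gt0; nia.
Qed.

Let N_lo := #|[set x | tw x == (k - e)%N]|.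
Let N_hi := #|[set x | tw x == (k + e)%N]|.

Lemma weight_counts_bent : (N_hi + N_lo + 1 = 16 * (e * e) /\ e * N_hi = e * N_lo + k)%N.
Proof.
have tw_split (x : F) :
    (nat_of_bool (x != 0%R) = (tw x == k - e)%N + (tw x == k + e)%N /\
     tw x = (k - e) * (tw x == k - e)%N + (k + e) * (tw x == k + e)%N)%N.
  have := half_supp_bent; have := e_gt0.
  have [-> | /trace_weight_bent] := eqVneq x 0; last by lia.
  by rewrite trace_weight0; nia.
have count_nonzero : (N_lo + N_hi = 16 * (e * e) - 1)%N.
  rewrite /N_lo /N_hi -!sum_nat_bool -big_split -expn2_m -cardF subn1.
  rewrite -(cardC1 (0 : F)) -sum1_card [RHS]big_mkcond /=.
  by apply: eq_bigr => x _; rewrite inE; case: (tw_split x) => <-.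
have sum_weights : ((k - e) * N_lo + (k + e) * N_hi = 2 * k * (8 * (e * e)))%N.
  rewrite -expn2_pred_m -(proj1 half_supp_bent) -sum_trace_weight // /N_lo /N_hi -!sum_nat_bool.
  rewrite !big_distrr -big_split; apply: eq_bigr => x _; exact/esym/(proj2 (tw_split x)).
by have := half_supp_bent; have := e_gt0; nia.
Qed.

Lemma weight_counts_bent_gt0 : (0 < N_lo)%N /\ (0 < N_hi)%N.
Proof. by have := weight_counts_bent; have := half_supp_bent; have := e_gt0; nia. Qed.

Lemma trace_weight_bent_attained (w : nat) :
  (w == k - e)%N || (w == k + e)%N -> exists2 x : F, x != 0 & tw x = w.
Proof.
move=> w_cases; have [N_lo_gt0 N_hi_gt0] := weight_counts_bent_gt0.
have [x x_w] : exists x, x \in [set x | tw x == w].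
  by apply/card_gt0P; case/orP: w_cases => /eqP->.
move: x_w; rewrite inE => /eqP tw_x; exists x => //.
apply: contra_eq_neq tw_x => ->; rewrite trace_weight0.
by move: w_cases; have := half_supp_bent; have := e_gt0; nia.
Qed.

Lemma card_code_bent : #|code m D| = (2 ^ m)%N.
Proof. by rewrite (card_code cardF m_gt0 trace_weight_bent_gt0). Qed.

Lemma min_dist_bent : is_min_dist (code m D) (k - e).
Proof.
apply: (is_min_dist_code cardF m_gt0 trace_weight_bent_gt0).
  by apply: trace_weight_bent_attained; rewrite eqxx.
by move=> x /trace_weight_bent; lia.
Qed.

Lemma nz_weights_bent : nz_weights (code m D) = [set inord (k - e); inord (k + e)].
Proof.
rewrite (nz_weights_code cardF m_gt0 trace_weight_bent_gt0).
apply/setP => w; rewrite in_set2; apply/imsetP/orP => [[x] | w_cases].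
  by rewrite inE => /trace_weight_bent [] tw_x ->; [left | right]; apply/eqP; congr inord; lia.
case: w_cases => /eqP ->;
  [have [|x x_neq0 <-] := @trace_weight_bent_attained (k - e)
  | have [|x x_neq0 <-] := @trace_weight_bent_attained (k + e)];
  by rewrite ?eqxx ?orbT //; exists x; rewrite ?inE.
Qed.

Lemma low_weight_rat : (k - e)%N%:Q = n%:Q / 2 - e%:Q.
Proof.
have [n_2k k_cases] := half_supp_bent; have e_pos := e_gt0.
by rewrite -!pmulrn natrB ?n_2k ?natrM; [field | nia].
Qed.

Lemma high_weight_rat : (k + e)%N%:Q = n%:Q / 2 + e%:Q.
Proof. by rewrite -!pmulrn (proj1 half_supp_bent) natrD natrM; field. Qed.

Lemma min_dist_bent_rat : (k - e)%N%:Q = (n%:Q - (2 ^ (m - 2)./2)%N%:Q) / 2.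
Proof. by rewrite low_weight_rat expn2_half_m2 -!pmulrn natrM; field. Qed.

Lemma wmult_bent_rat :
  (wmult (code m D) (k - e))%:Q = (((2 ^ m)%N%:Q - 1) - n%:Q / (2 ^ (m - 2)./2)%N%:Q) / 2 /\
  (wmult (code m D) (k + e))%:Q = (((2 ^ m)%N%:Q - 1) + n%:Q / (2 ^ (m - 2)./2)%N%:Q) / 2.
Proof.
rewrite !(wmult_code cardF m_gt0 trace_weight_bent_gt0) -/N_lo -/N_hi.
have [sum_counts diff_counts] := weight_counts_bent.
have e_neq0 : e%:R != 0 :> rat by rewrite pnatr_eq0 -lt0n e_gt0.
rewrite expn2_half_m2 (proj1 half_supp_bent) expn2_m -!pmulrn !natrM.
have n_over_e : (2 * k%:R) / (2 * e%:R) = k%:R / e%:R :> rat by field.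
rewrite n_over_e; apply: solve_two_counts e_neq0 _ _.
  by rewrite -!natrM -sum_counts !natrD.
by rewrite -!natrM -natrD diff_counts.
Qed.

End BentCode.

Theorem mainTheorem7 (F : finFieldType) (m : nat) (f : F -> bool) :
  #|F| = (2 ^ m)%N -> (4 <= m)%N -> ~~ odd m ->
  is_bent m f -> f 0 = false ->
  let D := supp f in
  let n := #|D| in
  let C := code m D in
  #|C| = (2 ^ m)%N /\
  (exists d : nat, is_min_dist C d /\
     d%:Q = (n%:Q - (2 ^ (m - 2)./2)%N%:Q) / 2) /\
  (exists w1 w2 : nat,
     w1 != w2 /\
     nz_weights C = [set inord w1; inord w2] /\
     w1%:Q = n%:Q / 2 - (2 ^ (m - 4)./2)%N%:Q /\
     w2%:Q = n%:Q / 2 + (2 ^ (m - 4)./2)%N%:Q /\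
     (wmult C w1)%:Q = (((2 ^ m)%N%:Q - 1) - n%:Q / (2 ^ (m - 2)./2)%N%:Q) / 2 /\
     (wmult C w2)%:Q = (((2 ^ m)%N%:Q - 1) + n%:Q / (2 ^ (m - 2)./2)%N%:Q) / 2).
Proof.
move=> cardF m_ge4 m_even f_bent f0 D n C.
have e_gt0 : (0 < 2 ^ (m - 4)./2)%N by rewrite expn_gt0.
split; first exact: card_code_bent.
split; first by exists (n./2 - 2 ^ (m - 4)./2)%N; split;
  [apply: min_dist_bent | apply: min_dist_bent_rat].
exists (n./2 - 2 ^ (m - 4)./2)%N, (n./2 + 2 ^ (m - 4)./2)%N.
have [wmult_lo wmult_hi] := wmult_bent_rat cardF m_ge4 m_even f_bent f0.
split; first by apply/eqP; lia.
split; first exact: nz_weights_bent.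
split; first exact: low_weight_rat.
by split; first exact: high_weight_rat.
Qed.
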